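(* Let $k_{\max}=k_{\max}(x)$ be a positive-integer-valued function with $\log k_{\max}(x)/\log x\to0$. Choose $m$ uniformly at random from $\{1,\dots,x\}$. For a positive integer $k$ and a prime $p$ let $A_k^p$ be the event that every $f\in[f_{m-k,m}]$ whose tuple satisfies $p\nmid a_0a_k$ is irreducible over $\mathbb{Q}$. Then \[ \lim_{x\to\infty}\mathbb{P}\Big(\bigcup_{p>k_{\max}}\ \bigcap_{k=1}^{k_{\max}}A_k^p\Big)=1, \] where the union is over primes $p>k_{\max}$.
   Context: For integers $0\le n<m$, $f_{n,m}(x)=\sum_{j=n}^{m}\frac{x^{j-n}}{j!}$. For a polynomial $f=\sum_{j=0}^{k}b_jx^j$ with $b_0b_k\ne0$ define $[f]=\{\sum_{j=0}^k a_jb_jx^j:\ a_j\in\mathbb{Z},\ a_0a_k\neq0\}$; each element of $[f]$ comes with its tuple $(a_0,\dots,a_k)$. Events involving $f_{m-k,m}$ are understood to include the requirement $m-k\ge0$. *)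

From HB Require Import structures.
From mathcomp Require Import all_boot all_order all_algebra.
From mathcomp Require Import all_classical all_reals all_analysis.
Set Implicit Arguments. Unset Strict Implicit. Unset Printing Implicit Defensive.
Import Order.TTheory GRing.Theory Num.Theory.
Local Open Scope ring_scope.

(* Coefficient b_j of f_{m-k,m} = sum_{j=0}^{k} x^j / (m-k+j)! *)
Definition fcoef (m k j : nat) : rat := ((m - k + j)`!)%:R^-1.

Definition fpoly (m k : nat) (a : nat -> int) : {poly rat} :=
  \poly_(j < k.+1) ((a j)%:~R * fcoef m k j).

(* A_k^p for the given m (includes the requirement m - k >= 0). *)
Definition eventA (m k p : nat) : Prop :=
  (k <= m)%N /\
  forall a : nat -> int, a 0%N != 0 -> a k != 0 ->
    ~~ (p%:Z %| a 0%N * a k)%Z -> irreducible_poly (fpoly m k a).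

Definition goodEvent (kmax m : nat) : Prop :=
  exists p : nat, prime p /\ (kmax < p)%N /\
    forall k : nat, (1 <= k <= kmax)%N -> eventA m k p.

Definition probGood (R : realType) (kmax x : nat) : R :=
  (\sum_(1 <= m < x.+1) (`[< goodEvent kmax m >] : nat)%:R) / x%:R.

From HB Require Import structures.
From mathcomp Require Import all_boot all_order all_algebra.
From mathcomp Require Import all_classical all_reals all_analysis.
From mathcomp Require Import zify ring lra.
Import Order.TTheory GRing.Theory Num.Theory.
Local Open Scope ring_scope.
Import numFieldNormedType.Exports.
Local Open Scope classical_set_scope.

(* Algebra: if a prime p divides m exactly (p | m, p^2 does not divide m) and
   k < p, then m! f_{m-k,m} = sum_j a_j m(m-1)...(m-k+j+1) x^j is an integer
   polynomial that is Eisenstein at p whenever p does not divide a_0 a_k;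
   hence A_k^p holds, and m is good as soon as such a p exceeds kmax.
   Counting: fix z >= kmax.  An integer m <= x that is not good is either
   z-smooth, or divisible by q^2 for a prime q > z.  The latter are at most
   sum_{n>z} x/n^2 <= x/z.  The z-smooth m > t multiply to a divisor of
   (z!)^(4x/z+1) (compare p-adic valuations with Legendre's formula), so
   there are at most t + 5 x ln z / ln (t+1) smooth m <= x.
   Analysis: with z = n kmax and t = x/n, the bad proportion is at most 3/n
   once 20 n ln (n kmax) <= ln x, which holds eventually because
   ln kmax = o(ln x); letting n grow gives the limit 1.
   The file follows this order: the algebraic criterion, the smooth-number
   bound, the count of bad integers, the real-valued estimates, and finally
   the limit. *)

Lemma irreducible_scale (F : fieldType) (c : F) (p : {poly F}) :
  c != 0 -> irreducible_poly (c *: p) -> irreducible_poly p.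
Proof.
move=> c0 [cp_gt1 cp_irr]; split; first by rewrite -(size_scale p c0).
move=> q q_neq1 q_dvd; apply: eqp_trans (eqp_scale p c0).
by apply: cp_irr; rewrite // dvdpZr.
Qed.

(* The integer polynomial m! f, for f the element of [f_{m-k,m}] with tuple a:
   its j-th coefficient is a_j m!/(m-k+j)! = a_j m^_(k-j). *)
Definition fpoly_int (m k : nat) (a : nat -> int) : {poly int} :=
  \poly_(j < k.+1) (a j * (m ^_ (k - j))%:Z).

(* Clearing denominators: m! = m^_(k-j) (m-k+j)! for j <= k <= m. *)
Lemma fpoly_scaled (m k : nat) (a : nat -> int) : (k <= m)%N ->
  (m`!)%:R *: fpoly m k a = map_poly intr (fpoly_int m k a).
Proof.
move=> km; apply/polyP => j; rewrite coefZ coef_map !coef_poly.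
case: ltnP => jk; last by rewrite mulr0.
have fact_split : m`! = (m ^_ (k - j) * (m - k + j)`!)%N.
  by rewrite -(@ffact_fact m (k - j)); [congr (_ * _`!)%N | ]; lia.
have fact_neq0 : ((m - k + j)`!)%:R != 0 :> rat by rewrite pnatr_eq0 -lt0n fact_gt0.
rewrite -[RHS]/((a j * (m ^_ (k - j))%:Z)%:~R : rat) intrM -pmulrn.
by rewrite /fcoef fact_split natrM; field.
Qed.

Lemma ffact_coprime (m p j : nat) : prime p -> (0 < m)%N -> (p %| m)%N ->
  (j < p)%N -> ~~ (p %| m.-1 ^_ j)%N.
Proof.
move=> p_pr m_gt0 pm; elim: j => [|j IH] jp; first by rewrite ffactn0 Euclid_dvd1.
have p_le_m : (p <= m)%N by apply: dvdn_leq.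
rewrite ffactnSr Euclid_dvdM // negb_or IH 1?ltnW //=.
apply/negP => p_dvd_factor.
have : (p %| m - (m.-1 - j))%N by apply: dvdn_sub.
have -> : (m - (m.-1 - j) = j.+1)%N by lia.
by move/dvdn_leq; lia.
Qed.

Lemma sq_ndvd_mul (p a b : nat) : prime p -> ~~ (p %| a)%N ->
  ~~ (p ^ 2 %| b)%N -> ~~ (p ^ 2 %| a * b)%N.
Proof.
move=> p_pr pa pb; rewrite Gauss_dvdr //.
by rewrite coprimeXl // prime_coprime.
Qed.

(* Eisenstein's criterion at an exact prime divisor p > k of m gives A_k^p:
   the constant coefficient a_0 m (m-1)...(m-k+1) is divisible by p exactly
   once, all middle coefficients contain the factor m, and the leading one
   is a_k. *)
Lemma eventA_of_exact_divisor (m k p : nat) : prime p -> (0 < k < p)%N ->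
  (p %| m)%N -> ~~ (p ^ 2 %| m)%N -> eventA m k p.
Proof.
move=> p_pr /andP[k_gt0 kp] pm p2m.
have m_gt0 : (0 < m)%N by case: m pm p2m => // _; rewrite dvdn0.
have km : (k <= m)%N by apply: leq_trans (ltnW kp) (dvdn_leq m_gt0 pm).
split=> // a a0 ak pa.
move: pa; rewrite dvdzE abszM Euclid_dvdM // negb_or => /andP[/= pa0 /= pak].
apply: (@irreducible_scale _ (m`!)%:R); first by rewrite pnatr_eq0 -lt0n fact_gt0.
rewrite fpoly_scaled //; apply/irreducible_rat_int.
set g := fpoly_int m k a.
have g_size : size g = k.+1 by rewrite size_poly_eq //= subnn ffactn0 mulr1.
apply: (eisenstein_crit p_pr); rewrite ?g_size.
- by rewrite eqSS -lt0n.
- by rewrite lead_coefE g_size coef_poly ltnSn subnn ffactn0 mulr1 dvdzE.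
- rewrite coef_poly /= subn0 -(prednK k_gt0) ffactnS.
  apply/negP; rewrite dvdzE abszM /= natrXE mulnCA mulnC; apply/negP.
  apply: sq_ndvd_mul => //.
  by rewrite Euclid_dvdM // negb_or pa0 ffact_coprime // (leq_ltn_trans (leq_pred k)).
- move=> i ik; rewrite coef_poly ltnS ltnW //; apply: dvdz_mull.
  by rewrite dvdzE /= -(subnSK ik) ffactnS dvdn_mulr.
Qed.

Section SmoothNumbers.
Local Open Scope nat_scope.

Definition smooth (z m : nat) : bool := all (fun q => q <= z) (primes m).

Definition smooth_count (z x : nat) : nat := \sum_(1 <= m < x.+1) smooth z m.

Definition smooth_prod (z x : nat) : nat :=
  \prod_(1 <= m < x.+1) (if smooth z m then m else 1).

Lemma smooth_prod_gt0 z x : 0 < smooth_prod z x.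
Proof.
rewrite /smooth_prod big_seq; elim/big_ind: _ => // [a b|m].
  by rewrite muln_gt0 => ->.
by rewrite mem_index_iota; case: ifP => //; lia.
Qed.

Lemma smooth_prod_dvd_fact z x : smooth_prod z x %| x`!.
Proof.
rewrite /smooth_prod fact_prod; apply: (big_ind2 (fun a b => a %| b)) => //.
  by move=> a b c d; apply: dvdn_mul.
by move=> m _; case: ifP.
Qed.

Lemma smooth_prod_primes z x p : p \in primes (smooth_prod z x) -> p <= z.
Proof.
rewrite mem_primes => /and3P [p_pr _]; rewrite /smooth_prod big_seq Euclid_dvd_prod //.
apply: contraLR; rewrite -ltnNge => zp.
elim/big_ind: _ => // [a b /negbTE -> /negbTE -> //|m].
rewrite mem_index_iota => /andP [m_gt0 _].
case: ifP => m_smooth; last by rewrite Euclid_dvd1.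
apply/negP => pm.
have : p \in primes m by rewrite mem_primes p_pr m_gt0.
by move/(allP m_smooth) => /=; lia.
Qed.

(* Geometric decay in Legendre's formula: sum_{k>=1} y/p^k <= 2 y/p. *)
Lemma legendre_sum_le (p : nat) : 1 < p -> forall K y,
  \sum_(1 <= k < K.+1) y %/ p ^ k <= 2 * (y %/ p).
Proof.
move=> p_gt1; elim=> [|K IH] y; first by rewrite big_geq.
rewrite big_nat_recl //.
have -> : \sum_(1 <= i < K.+1) y %/ p ^ i.+1 = \sum_(1 <= i < K.+1) (y %/ p) %/ p ^ i.
  by apply: eq_bigr => i _; rewrite expnS divnMA.
have := IH (y %/ p); rewrite expn1.
have : 2 * ((y %/ p) %/ p) <= y %/ p by have := leq_trunc_div (y %/ p) p; nia.
lia.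
Qed.

(* Comparing p-adic valuations prime by prime: the smooth numbers up to x
   multiply to a divisor of (z!)^(4x/z + 1). *)
Lemma smooth_prod_dvd z x : 0 < z -> smooth_prod z x %| (z`!) ^ ((4 * x) %/ z + 1).
Proof.
move=> z_gt0; apply/(dvdn_partP _ (smooth_prod_gt0 z x)) => p p_prod.
have pz := @smooth_prod_primes z x p p_prod.
move: p_prod; rewrite mem_primes => /and3P [p_pr _ _].
have p_gt1 := prime_gt1 p_pr.
rewrite p_part pfactor_dvdn // ?expn_gt0 ?fact_gt0 // lognX.
apply: (leq_trans (dvdn_leq_log p (fact_gt0 x) (smooth_prod_dvd_fact z x))).
rewrite !logn_fact //.
apply: (leq_trans (legendre_sum_le p p_gt1 x x)).
have zp_le : z %/ p <= \sum_(1 <= k < z.+1) z %/ p ^ k.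
  by rewrite big_nat_recl // expn1 leq_addr.
apply: (leq_trans _ (leq_mul (leqnn _) zp_le)).
have h1 := leq_trunc_div x p.
have h2 := ltn_ceil z (ltnW p_gt1).
have h3 := ltn_ceil (4 * x) z_gt0.
have h4 : 1 <= z %/ p by rewrite divn_gt0 // ltnW.
set a := x %/ p in h1 *; set b := z %/ p in h2 h4 *; set c := (4 * x) %/ z in h3 *.
nia.
Qed.

(* Each smooth m > t contributes a factor of at least t + 1. *)
Lemma smooth_prod_lower z x t :
  t.+1 ^ (\sum_(1 <= m < x.+1) (smooth z m && (t < m))) <= smooth_prod z x.
Proof.
rewrite /smooth_prod; elim: x => [|x IH]; first by rewrite !big_geq.
rewrite big_nat_recr // [X in _ <= X]big_nat_recr //= expnD.
apply: leq_mul => //.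
by case: (smooth z x.+1); case: (ltnP t x.+1) => h; rewrite ?expn1 ?expn0 //; lia.
Qed.

Lemma count_le_bound x t : \sum_(1 <= m < x.+1) (m <= t) <= t.
Proof.
suff : \sum_(1 <= m < x.+1) (m <= t) <= minn x t by lia.
elim: x => [|x IH]; first by rewrite big_geq.
by rewrite (big_nat_recr x.+1) //=; case: (leqP x.+1 t) => h /=; lia.
Qed.

Lemma fact_le_pow z : z`! <= z ^ z.
Proof.
elim: z => // z IH; rewrite factS expnS; apply: leq_mul => //.
by apply: (leq_trans IH); case: z IH => // z _; rewrite leq_exp2r.
Qed.

(* Counting bound for smooth numbers: at most t of them lie in [1, t], and
   the remaining ones, each > t, multiply to at most z^(z(4x/z+1)). *)
Lemma smooth_count_pow z x t : 0 < z ->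
  t.+1 ^ (smooth_count z x - t) <= z ^ (z * ((4 * x) %/ z + 1)).
Proof.
move=> z_gt0.
have split_count : smooth_count z x <=
    \sum_(1 <= m < x.+1) (m <= t) + \sum_(1 <= m < x.+1) (smooth z m && (t < m)).
  rewrite -big_split /=; apply: leq_sum => m _.
  by case: (smooth z m); case: leqP.
have small := count_le_bound x t.
apply: (@leq_trans (t.+1 ^ (\sum_(1 <= m < x.+1) (smooth z m && (t < m))))).
  by apply: leq_pexp2l => //; lia.
apply: (leq_trans (smooth_prod_lower z x t)).
apply: (@leq_trans ((z`!) ^ ((4 * x) %/ z + 1))).
  by apply: dvdn_leq; [rewrite expn_gt0 fact_gt0 | apply: smooth_prod_dvd].
by rewrite expnM leq_exp2r ?addn1 // fact_le_pow.
Qed.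

End SmoothNumbers.

Section BadIntegers.
Local Open Scope nat_scope.

Lemma goodEvent_of_exact_divisor kmax m p : prime p -> kmax < p ->
  p %| m -> ~~ (p ^ 2 %| m) -> goodEvent kmax m.
Proof.
move=> p_pr kp pm p2m; exists p; split=> //; split=> // k /andP [k_gt0 k_le].
by apply: eventA_of_exact_divisor => //; rewrite k_gt0 (leq_ltn_trans k_le kp).
Qed.

Definition good_count (kmax x : nat) : nat :=
  \sum_(1 <= m < x.+1) (`[< goodEvent kmax m >] : nat).

Lemma good_count_le kmax x : good_count kmax x <= x.
Proof.
apply: (@leq_trans (\sum_(1 <= m < x.+1) 1)); first by apply: leq_sum => m _; case: asbool.
by rewrite sum_nat_const_nat muln1 subn1.
Qed.

(* If kmax <= z, every m in [1, x] is good, z-smooth, or divisible by n^2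
   for some n in (z, x]: a prime factor q > z of a non-smooth m either
   divides m exactly or has q^2 | m.  Counting such m by the n^2 dividing
   them gives the bound. *)
Lemma bad_count_le kmax z x : kmax <= z ->
  x <= good_count kmax x + smooth_count z x + \sum_(z.+1 <= n < x.+1) x %/ n ^ 2.
Proof.
move=> kz.
have -> : \sum_(z.+1 <= n < x.+1) x %/ n ^ 2 =
          \sum_(1 <= m < x.+1) \sum_(z.+1 <= n < x.+1) (n ^ 2 %| m).
  by rewrite exchange_big_nat; apply: eq_bigr => n _; rewrite divn_count_dvd.
rewrite -!big_split /=.
rewrite -[X in X <= _]muln1 -[X in X * 1](subn1 x.+1) -sum_nat_const_nat.
rewrite big_nat_cond [X in _ <= X]big_nat_cond; apply: leq_sum => m.
rewrite andbT => /andP [m_gt0 mx].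
case m_smooth: (smooth z m); first by lia.
have := negbT m_smooth; rewrite /smooth => /allPn [q qm zq].
move: (qm); rewrite mem_primes => /and3P [q_pr _ qdm].
case q2m: (q ^ 2 %| m).
  rewrite (bigD1_seq q) ?q2m /= ?iota_uniq //; first by lia.
  by rewrite mem_index_iota; have := dvdn_leq m_gt0 qdm; lia.
rewrite asboolT; first by lia.
by apply: (@goodEvent_of_exact_divisor kmax m q q_pr) => //; [lia | rewrite q2m].
Qed.

End BadIntegers.

Section RealBounds.
Variable R : realType.

Lemma natdiv_le (x d : nat) : (0 < d)%N -> ((x %/ d)%N%:R : R) <= x%:R / d%:R.
Proof.
by move=> d_gt0; rewrite ler_pdivlMr ?ltr0n // -natrM ler_nat leq_trunc_div.
Qed.

Lemma inv_sq_le_telescope (y : R) : 1 <= y -> ((y + 1) ^+ 2)^-1 <= y^-1 - (y + 1)^-1.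
Proof.
move=> y_ge1.
have -> : y^-1 - (y + 1)^-1 = y^-1 * (y + 1)^-1 by field; lra.
rewrite expr2 invfM ler_pM2r ?invr_gt0; last lra.
by rewrite lef_pV2 ?posrE; lra.
Qed.

Lemma tail_inv_sq_le (z K : nat) : (0 < z)%N ->
  \sum_(z.+1 <= n < (z + K).+1) (((n ^ 2)%N%:R : R))^-1 <= z%:R^-1 - (z + K)%:R^-1.
Proof.
move=> z_gt0; elim: K => [|K IH]; first by rewrite addn0 big_geq // subrr.
rewrite addnS big_nat_recr /=; last by lia.
have := @inv_sq_le_telescope (z + K)%:R.
rewrite natrX -!natr1.
have : (1 : R) <= (z + K)%:R by rewrite ler1n; lia.
lra.
Qed.

Lemma square_multiples_le (z x : nat) : (0 < z)%N ->
  ((\sum_(z.+1 <= n < x.+1) x %/ n ^ 2)%N%:R : R) <= x%:R / z%:R.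
Proof.
move=> z_gt0; rewrite natr_sum.
have [xz|zx] := leqP x z; first by rewrite big_geq ?ltnS // divr_ge0.
apply: (@le_trans _ _ (\sum_(z.+1 <= n < x.+1) x%:R * ((n ^ 2)%N%:R)^-1)).
  rewrite big_nat_cond [X in _ <= X]big_nat_cond; apply: ler_sum => n /andP [/andP [zn _] _].
  by apply: natdiv_le; rewrite expn_gt0; lia.
rewrite -mulr_sumr.
have := @tail_inv_sq_le z (x - z) z_gt0; rewrite subnKC; last by lia.
move=> tail; apply: (le_trans (ler_wpM2l (ler0n _ _) tail)).
rewrite mulrBr; have : (0 : R) <= x%:R * x%:R^-1 by rewrite mulr_ge0 // invr_ge0.
lra.
Qed.

Lemma smooth_count_ln (z x t : nat) : (0 < z)%N -> (0 < t)%N -> (z <= x)%N ->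
  ((smooth_count z x)%:R : R) <= t%:R + 5 * x%:R * ln z%:R / ln t.+1%:R.
Proof.
move=> z_gt0 t_gt0 zx.
set S := smooth_count z x; set c := (z * ((4 * x) %/ z + 1))%N.
have c_le : (c%:R : R) <= 5 * x%:R.
  have : (c <= 5 * x)%N.
    by rewrite /c mulnDr muln1 mulnC; have := leq_trunc_div (4 * x) z; lia.
  by rewrite -(ler_nat R) natrM.
have lnt_gt0 : (0 : R) < ln t.+1%:R by apply: ln_gt0; rewrite ltr1n ltnS.
have lnz_ge0 : (0 : R) <= ln z%:R by apply: ln_ge0; rewrite ler1n.
have pow_le : ((t.+1%:R : R) ^+ (S - t)) <= z%:R ^+ c.
  by rewrite -!natrX ler_nat smooth_count_pow.
have : ln ((t.+1%:R : R) ^+ (S - t)) <= ln (z%:R ^+ c).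
  by rewrite ler_ln // posrE exprn_gt0 // ltr0n.
rewrite !lnXn ?ltr0n // -[_ *+ (S - t)]mulr_natl -[_ *+ c]mulr_natl.
rewrite -ler_pdivlMr // => St_le.
have : (S%:R : R) <= t%:R + (S - t)%N%:R by rewrite -natrD ler_nat; lia.
have : c%:R * ln z%:R / ln t.+1%:R <= 5 * x%:R * ln z%:R / (ln t.+1%:R : R).
  by rewrite ler_pM2r ?invr_gt0 // ler_wpM2r.
lra.
Qed.

(* With t = x/n, the smooth bound becomes at most (3/2) x/n smooth integers
   as soon as 20 n ln z <= ln x: then ln (t+1) >= ln x - ln n >= ln x / 2. *)
Lemma smooth_count_le_div (n z x : nat) :
  (0 < n)%N -> (n <= z)%N -> (n < x)%N ->
  20 * n%:R * ln (z%:R : R) <= ln x%:R ->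
  ((smooth_count z x)%:R : R) <= 3 / 2 * (x%:R / n%:R).
Proof.
move=> n_gt0 nz nx lnz_le.
have z_gt0 : (0 < z)%N by apply: leq_trans nz.
have x_gt0 : (0 < x)%N by apply: leq_ltn_trans nx.
set t := (x %/ n)%N; set L := ln (x%:R : R) in lnz_le *.
have t_gt0 : (0 < t)%N by rewrite divn_gt0 // ltnW.
have nR_ge1 : (1 : R) <= n%:R by rewrite ler1n.
have L_gt0 : 0 < L by apply: ln_gt0; rewrite ltr1n; apply: leq_trans nx.
have lnz_ge0 : (0 : R) <= ln z%:R by apply: ln_ge0; rewrite ler1n.
have lnn_le : ln (n%:R : R) <= ln z%:R.
  by rewrite ler_ln ?posrE ?ltr0n // ler_nat.
have lnz_L : 20 * ln (z%:R : R) <= L.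
  by apply: le_trans lnz_le; rewrite -mulrA ler_wpM2l // ler_peMl.
have zx : (z <= x)%N by rewrite -(ler_nat R) -ler_ln ?posrE ?ltr0n // -/L; lra.
have lnt_ge : L / 2 <= ln t.+1%:R.
  have : (x%:R : R) / n%:R <= t.+1%:R.
    by rewrite ler_pdivrMr ?ltr0n // -natrM ler_nat ltnW // ltn_ceil.
  rewrite -ler_ln ?posrE ?divr_gt0 ?ltr0n // ln_div ?posrE ?ltr0n // -/L.
  lra.
have ratio_le : 5 * x%:R * ln z%:R / ln t.+1%:R <= x%:R / n%:R / 2 :> R.
  rewrite ler_pdivrMr; last by lra.
  have lnz_scaled : 5 * x%:R * ln z%:R <= 5 * x%:R * (L / (20 * n%:R)) :> R.
    by rewrite ler_wpM2l ?mulr_ge0 // ler_pdivlMr ?mulr_gt0 ?ltr0n // mulrC.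
  have lnt_scaled : x%:R / n%:R / 2 * (L / 2) <= x%:R / n%:R / 2 * ln t.+1%:R :> R.
    by rewrite ler_wpM2l // !divr_ge0.
  have same_bound : 5 * x%:R * (L / (20 * n%:R)) = x%:R / n%:R / 2 * (L / 2) :> R.
    by field; rewrite pnatr_eq0 -lt0n.
  lra.
have t_le : (t%:R : R) <= x%:R / n%:R by apply: natdiv_le.
have := smooth_count_ln z x t z_gt0 t_gt0 zx.
lra.
Qed.

Lemma probGood_dev_le (k x : nat) (B : R) : (0 < x)%N ->
  x%:R - (good_count k x)%:R <= B * x%:R -> `|1 - probGood R k x| <= B.
Proof.
move=> x_gt0 bad_le.
have xR_gt0 : (0 : R) < x%:R by rewrite ltr0n.
have -> : probGood R k x = (good_count k x)%:R / x%:R by rewrite /probGood -natr_sum.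
rewrite ger0_norm; last by rewrite subr_ge0 ler_pdivrMr // mul1r ler_nat good_count_le.
by rewrite -[X in X - _](divff (lt0r_neq0 xR_gt0)) -mulrBl ler_pdivrMr.
Qed.

(* With z = n k, bad m are
   z-smooth (at most (3/2) x/n of them) or divisible by a square > z^2 (at
   most x/z <= x/n of them). *)
Lemma probGood_deficit_le (n k x : nat) :
  (0 < n)%N -> (0 < k)%N -> (n < x)%N ->
  20 * n%:R * ln ((n * k)%:R : R) <= ln x%:R ->
  `|1 - probGood R k x| <= 3 / n%:R.
Proof.
move=> n_gt0 k_gt0 nx lnx_ge.
set z := (n * k)%N.
have z_gt0 : (0 < z)%N by rewrite muln_gt0 n_gt0.
have count := bad_count_le k z x (leq_pmull k n_gt0).
have squares := square_multiples_le z x z_gt0.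
have smooth := smooth_count_le_div n z x n_gt0 (leq_pmulr n k_gt0) nx lnx_ge.
have x_z : (x%:R : R) / z%:R <= x%:R / n%:R.
  by rewrite ler_wpM2l // lef_pV2 ?posrE ?ltr0n // ler_nat leq_pmulr.
have xn_ge0 : (0 : R) <= x%:R / n%:R by rewrite divr_ge0.
apply: probGood_dev_le; first exact: leq_ltn_trans nx.
rewrite mulrAC -mulrA.
have : (x%:R : R) <= (good_count k x)%:R + (smooth_count z x)%:R
                     + (\sum_(z.+1 <= n < x.+1) x %/ n ^ 2)%N%:R.
  by rewrite -!natrD ler_nat.
lra.
Qed.

(* Choice of n from eps: c / n <= eps for n = floor(c/eps) + 1. *)
Lemma div_truncnS_le (c eps : R) : 0 < eps ->
  c / (Num.truncn (c / eps)).+1%:R <= eps.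
Proof.
move=> eps_gt0; have := truncnS_gt (c / eps).
by rewrite ltr_pdivrMr // ler_pdivrMr ?ltr0n // mulrC => /ltW.
Qed.

Lemma ln_nat_near_ge (M : R) : \forall x \near \oo, M <= ln (x%:R : R).
Proof.
apply: filterS (nbhs_infty_ger (expR M)) => x expM_le.
by rewrite -[M]expRK ler_ln ?posrE ?expR_gt0 // (lt_le_trans (expR_gt0 M) expM_le).
Qed.

Lemma ln_dominates_near (kmax : nat -> nat) (n : nat) :
  (forall x, (0 < kmax x)%N) -> (0 < n)%N ->
  ((ln ((kmax x)%:R : R) / ln (x%:R : R)) @[x --> \oo] --> (0 : R)) ->
  \forall x \near \oo, 20 * n%:R * ln ((n * kmax x)%:R : R) <= ln (x%:R : R).
Proof.
move=> kmax_gt0 n_gt0 ratio0.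
have n40_gt0 : (0 : R) < 40 * n%:R by rewrite mulr_gt0 ?ltr0n.
have inv_gt0 : (0 : R) < (40 * n%:R)^-1 by rewrite invr_gt0.
have ratio_small := proj1 (cvgr0Pnorm_le _) ratio0 _ inv_gt0.
have lnn_ge0 : (0 : R) <= ln n%:R by apply: ln_ge0; rewrite ler1n.
near=> x.
have L_ge : 40 * n%:R * ln n%:R + 1 <= ln (x%:R : R).
  by near: x; apply: ln_nat_near_ge.
have ratio_le : `|ln ((kmax x)%:R : R) / ln (x%:R : R)| <= (40 * n%:R)^-1.
  by near: x; exact: ratio_small.
set L := ln (x%:R : R) in L_ge ratio_le *; set K := ln ((kmax x)%:R : R) in ratio_le *.
have K_ge0 : 0 <= K by apply: ln_ge0; rewrite ler1n.
have L_gt0 : 0 < L by have := mulr_ge0 (ltW n40_gt0) lnn_ge0; lra.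
have K_le : 40 * n%:R * K <= L.
  move: ratio_le; rewrite ger0_norm ?divr_ge0 ?(ltW L_gt0) // ler_pdivrMr // => K_le.
  by rewrite mulrC -ler_pdivlMr // mulrC.
rewrite natrM lnM ?posrE ?ltr0n // mulrDr -/K.
lra.
Unshelve. all: by end_near.
Qed.

End RealBounds.

Theorem proposition3 (R : realType) (kmax : nat -> nat) :
  (forall x : nat, (0 < kmax x)%N) ->
  ((ln ((kmax x)%:R : R) / ln (x%:R : R)) @[x --> \oo] --> (0 : R)) ->
  (probGood R (kmax x) x @[x --> \oo] --> (1 : R)).
Proof.
move=> kmax_gt0 ratio0; apply/cvgrPdist_le => eps eps_gt0.
near=> x.
apply: le_trans (@div_truncnS_le R 3 eps eps_gt0).
apply: probGood_deficit_le => //.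
  by near: x; apply: nbhs_infty_gt.
by near: x; apply: ln_dominates_near.
Unshelve. all: by end_near.
Qed.
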